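(* For every graph $G$, any graph obtained from $G$ by subdividing every edge at least twice (i.e. replacing each edge by a path with at least two internal vertices, the numbers of internal vertices possibly differing between edges) belongs to 3-CBU.
   Context: Let $e_1,e_2,e_3$ be the standard basis of $\mathbb{R}^3$. A graph belongs to 3-CBU if one can assign to each vertex an axis-parallel box (product of 3 closed intervals of positive length) in $\mathbb{R}^3$ such that the boxes have pairwise disjoint interiors, two distinct vertices are adjacent iff their boxes intersect, and any two intersecting boxes intersect in a 2-dimensional box orthogonal to $e_1$. *)

From Stdlib Require Import Reals.
From mathcomp Require Import all_boot.

Set Implicit Arguments.
Unset Strict Implicit.
Unset Printing Implicit Defensive.
Local Open Scope R_scope.

(* Points of R^3 are functions nat -> R, only coordinates 0,1,2 matter
   (coordinate 0 corresponds to e_1). *)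
Definition point := nat -> R.

Record box := Box { lo : nat -> R; hi : nat -> R }.

Definition box_ok (B : box) : Prop :=
  forall j : nat, (j < 3)%N -> (lo B j < hi B j).

Definition in_box (B : box) (p : point) : Prop :=
  forall j : nat, (j < 3)%N -> (lo B j <= p j <= hi B j).

Definition in_interior (B : box) (p : point) : Prop :=
  forall j : nat, (j < 3)%N -> (lo B j < p j < hi B j).

Definition boxes_intersect (B B' : box) : Prop :=
  exists p : point, in_box B p /\ in_box B' p.

Definition inter_2dim_orth_e1 (B B' : box) : Prop :=
  exists c a1 b1 a2 b2 : R, (a1 < b1) /\ (a2 < b2) /\
    forall p : point, (in_box B p /\ in_box B' p) <->
      (p 0%N = c /\ (a1 <= p 1%N <= b1) /\ (a2 <= p 2%N <= b2)).

Definition CBU3 (V : Type) (adj : V -> V -> Prop) : Prop :=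
  exists B : V -> box,
    (forall v, box_ok (B v)) /\
    (forall u v, u <> v -> ~ (exists p, in_interior (B u) p /\ in_interior (B v) p)) /\
    (forall u v, u <> v -> (adj u v <-> boxes_intersect (B u) (B v))) /\
    (forall u v, u <> v -> boxes_intersect (B u) (B v) -> inter_2dim_orth_e1 (B u) (B v)).

(* Each edge {u,v} is oriented so that
   enum_rank u < enum_rank v, and replaced by the path
   u - (u,v,1) - (u,v,2) - ... - (u,v,k u v) - v
   with k u v internal vertices. *)
Section Subdiv.
Variables (T : finType) (e : rel T) (k : T -> T -> nat).

Definition sub_raw := (T + (T * T * nat))%type.

Definition sub_valid (x : sub_raw) : bool :=
  match x with
  | inl _ => true
  | inr (u, v, i) => [&& e u v, (enum_rank u < enum_rank v)%N & (0 < i <= k u v)%N]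
  end.

Definition sub_vertex := { x : sub_raw | sub_valid x }.

Definition sub_step (x y : sub_raw) : Prop :=
  match x, y with
  | inl a, inr (u, v, i) => a = u /\ i = 1%N
  | inr (u, v, i), inr (u', v', j) => u = u' /\ v = v' /\ j = i.+1
  | inr (u, v, i), inl b => b = v /\ i = k u v
  | _, _ => False
  end.

Definition sub_adj (x y : sub_vertex) : Prop :=
  sub_step (proj1_sig x) (proj1_sig y) \/ sub_step (proj1_sig y) (proj1_sig x).
End Subdiv.

From Stdlib Require Import Reals Lra Classical.
From mathcomp Require Import all_boot zify.

Set Implicit Arguments.
Unset Strict Implicit.
Unset Printing Implicit Defensive.

Local Open Scope R_scope.

(* Number the vertices of G as w_0, ..., w_(n-1) and let s exceed every
   number of internal vertices by 2.  The box of w_r is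
   [r s, r s + 1] x [r, r + 1] x [0, Z], and each edge uv, oriented so that u
   comes before v, gets its own slab of height 1 in [0, Z] along e_3.  The
   first internal vertex of uv is a long box running along e_1 from the face
   of u to just before v, at the level of u along e_2, so it passes below every
   vertex it crosses; the remaining k - 1 >= 1 internal vertices are unit boxes
   along e_1, lined up against the face of v, which climb along e_2 from the
   level of u to that of v.  Consecutive vertices of a path then meet in faces
   orthogonal to e_1, and any other two boxes are separated along one axis:
   two vertex boxes, or two non-consecutive boxes of a path, along e_1; boxes
   of different paths along e_3; a vertex box and a path box along e_1, or
   along e_2 for the first box of the path. *)

Definition face_contact (B B' : box) : Prop :=
  hi B 0%N = lo B' 0%N /\
  lo B 1%N < hi B' 1%N /\ lo B' 1%N < hi B 1%N /\
  lo B 2%N < hi B' 2%N /\ lo B' 2%N < hi B 2%N.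

Definition separated (B B' : box) : Prop :=
  exists2 j, (j < 3)%N & hi B j < lo B' j \/ hi B' j < lo B j.

Lemma separated_sym B B' : separated B B' -> separated B' B.
Proof. by case=> j lt_j3 sep_j; exists j => //; tauto. Qed.

Lemma separated_disjoint B B' : separated B B' -> ~ boxes_intersect B B'.
Proof.
case=> j lt_j3 sep_j [p [inB inB']].
by have := inB j lt_j3; have := inB' j lt_j3; lra.
Qed.

Lemma in_interior_in_box B p : in_interior B p -> in_box B p.
Proof. by move=> int j lt_j3; have := int j lt_j3; lra. Qed.

Lemma face_contact_interiors_disjoint B B' p :
  face_contact B B' -> in_interior B p -> in_interior B' p -> False.
Proof.
by move=> [contact0 _] int int'; have := int 0%N isT; have := int' 0%N isT; lra.
Qed.

Lemma in_itv_inter a b a' b' x :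
  (a <= x <= b /\ a' <= x <= b') <-> Rmax a a' <= x <= Rmin b b'.
Proof. by rewrite /Rmax /Rmin; repeat case: Rle_dec; split; lra. Qed.

Lemma Rmax_lt_Rmin a b a' b' :
  a < b -> a < b' -> a' < b -> a' < b' -> Rmax a a' < Rmin b b'.
Proof. by rewrite /Rmax /Rmin; repeat case: Rle_dec; lra. Qed.

Lemma face_contact_inter_2dim_orth_e1 B B' :
  box_ok B -> box_ok B' -> face_contact B B' -> inter_2dim_orth_e1 B B'.
Proof.
move=> ok ok' [contact0 [lt1 [lt1' [lt2 lt2']]]].
have ok0 := ok 0%N isT; have ok1 := ok 1%N isT; have ok2 := ok 2%N isT.
have ok0' := ok' 0%N isT; have ok1' := ok' 1%N isT; have ok2' := ok' 2%N isT.
exists (hi B 0%N), (Rmax (lo B 1%N) (lo B' 1%N)), (Rmin (hi B 1%N) (hi B' 1%N)),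
  (Rmax (lo B 2%N) (lo B' 2%N)), (Rmin (hi B 2%N) (hi B' 2%N)).
split; [exact: Rmax_lt_Rmin | split; [exact: Rmax_lt_Rmin | move=> p; split]].
- move=> [inB inB']; have := inB 0%N isT; have := inB' 0%N isT.
  split; first lra.
  by split; apply/in_itv_inter; split; [apply: inB | apply: inB' | apply: inB | apply: inB'].
- move=> [p0 [/in_itv_inter [p1 p1'] /in_itv_inter [p2 p2']]].
  by split=> -[|[|[|j]]] //= _; lra.
Qed.

Lemma inter_2dim_orth_e1_sym B B' :
  inter_2dim_orth_e1 B B' -> inter_2dim_orth_e1 B' B.
Proof.
case=> [c [a1 [b1 [a2 [b2 [lt1 [lt2 inter]]]]]]].
by exists c, a1, b1, a2, b2; split; [|split] => // p; rewrite -inter; tauto.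
Qed.

Lemma inter_2dim_orth_e1_intersect B B' :
  inter_2dim_orth_e1 B B' -> boxes_intersect B B'.
Proof.
case=> [c [a1 [b1 [a2 [b2 [lt1 [lt2 inter]]]]]]].
exists (fun j => match j with 0%N => c | 1%N => a1 | _ => a2 end).
by apply/inter; split; [|split] => //; lra.
Qed.

Lemma CBU3_of_contact_separated (V : Type) (adj : V -> V -> Prop) (B : V -> box) :
  (forall v, box_ok (B v)) ->
  (forall u v, u <> v -> adj u v ->
     face_contact (B u) (B v) \/ face_contact (B v) (B u)) ->
  (forall u v, u <> v -> ~ adj u v -> separated (B u) (B v)) ->
  CBU3 adj.
Proof.
move=> ok contact sep; exists B; split=> //; split; [|split].
- move=> u v uv [p [int_u int_v]].
  case: (classic (adj u v)) => [/(contact _ _ uv) [c|c] | nadj].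
  + exact: face_contact_interiors_disjoint c int_u int_v.
  + exact: face_contact_interiors_disjoint c int_v int_u.
  + apply: (separated_disjoint (sep _ _ uv nadj)).
    by exists p; split; apply: in_interior_in_box.
- move=> u v uv; split=> [/(contact _ _ uv) [c|c] | meet].
  + exact/inter_2dim_orth_e1_intersect/face_contact_inter_2dim_orth_e1.
  + apply/inter_2dim_orth_e1_intersect/inter_2dim_orth_e1_sym.
    exact: face_contact_inter_2dim_orth_e1.
  + by apply: NNPP => nadj; apply: (separated_disjoint (sep _ _ uv nadj)).
- move=> u v uv meet.
  case: (classic (adj u v)) => [/(contact _ _ uv) [c|c] | nadj].
  + exact: face_contact_inter_2dim_orth_e1.
  + exact/inter_2dim_orth_e1_sym/face_contact_inter_2dim_orth_e1.
  + by case: (separated_disjoint (sep _ _ uv nadj)).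
Qed.

Lemma INR_leq m n : (m <= n)%N -> INR m <= INR n.
Proof. by move/leP; apply: le_INR. Qed.

Lemma INR_ltn m n : (m < n)%N -> INR m < INR n.
Proof. by move/ltP; apply: lt_INR. Qed.

Section SubdivisionBoxes.
Variables (T : finType) (k : T -> T -> nat).

Definition rk (w : T) : nat := enum_rank w.
Definition kmax : nat := \max_(p : T * T) k p.1 p.2.
Definition xpos (w : T) : R := INR (rk w * (kmax + 2)).
Definition ypos (w : T) : R := INR (rk w).
Definition zlayer (u v : T) : R := INR (2 * enum_rank (u, v)).
Definition ztop : R := INR (2 * #|{: T * T}|).

Definition vertex_box (w : T) : box :=
  Box (fun j => match j with 0%N => xpos w | 1%N => ypos w | _ => 0 end)
      (fun j => match j with 0%N => xpos w + 1 | 1%N => ypos w + 1 | _ => ztop end).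

Definition path_box (u v : T) (i : nat) : box :=
  Box (fun j => match j with
        | 0%N => if i == 1%N then xpos u + 1 else xpos v - INR (k u v) + INR i - 1
        | 1%N => ypos u + /4
        | _ => zlayer u v end)
      (fun j => match j with
        | 0%N => xpos v - INR (k u v) + INR i
        | 1%N => if i == 1%N then ypos u + 3/4 else ypos v + 3/4
        | _ => zlayer u v + 1 end).

Definition sub_box (x : sub_raw T) : box :=
  match x with inl w => vertex_box w | inr (u, v, i) => path_box u v i end.

Lemma rk_inj : injective rk.
Proof. by move=> u v /ord_inj; apply: enum_rank_inj. Qed.

Lemma xpos_gap u v : (rk u < rk v)%N -> xpos u + INR kmax + 2 <= xpos v.
Proof.
move=> uv; rewrite /xpos -[2]/(INR 2) -!plus_INR; apply: INR_leq.
by have := leq_mul uv (leqnn (kmax + 2)); rewrite mulSn; lia.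
Qed.

Lemma ypos_gap u v : (rk u < rk v)%N -> ypos u + 1 <= ypos v.
Proof. by move=> uv; rewrite /ypos -S_INR; apply: INR_leq. Qed.

Lemma k_le_kmax u v : INR (k u v) <= INR kmax.
Proof. exact/INR_leq/(leq_bigmax (F := fun p : T * T => k p.1 p.2) (u, v)). Qed.

Lemma zlayer_bounds u v : 0 <= zlayer u v /\ zlayer u v + 1 <= ztop.
Proof.
split; first exact: pos_INR.
rewrite /zlayer /ztop -S_INR; apply: INR_leq.
apply: (@leq_trans (2 * (enum_rank (u, v)).+1)); first lia.
exact: leq_mul (leqnn 2) (ltn_ord _).
Qed.

Lemma zlayer_gap u v u' v' : (u, v) <> (u', v') ->
  zlayer u v + 1 < zlayer u' v' \/ zlayer u' v' + 1 < zlayer u v.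
Proof.
move=> uv_ne; rewrite /zlayer -!S_INR.
case: (ltngtP (enum_rank (u, v)) (enum_rank (u', v'))) => [lt|gt|/ord_inj eq].
- by left; apply: INR_ltn; lia.
- by right; apply: INR_ltn; lia.
- by case: uv_ne; apply: enum_rank_inj.
Qed.

Lemma vertex_box_ok w : box_ok (vertex_box w).
Proof.
have [z0 z1] := zlayer_bounds w w.
by move=> [|[|[|j]]] //= _; lra.
Qed.

Lemma path_box_ok u v i : (rk u < rk v)%N -> box_ok (path_box u v i).
Proof.
move=> uv; have xgap := xpos_gap uv; have ygap := ypos_gap uv.
have k_le := k_le_kmax u v.
move=> [|[|[|j]]] //= _; last lra.
all: by case: (i =P 1%N) => [i1|_]; rewrite ?i1 /=; lra.
Qed.

Lemma first_path_box_contact u v :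
  (rk u < rk v)%N -> face_contact (vertex_box u) (path_box u v 1).
Proof.
move=> uv; have := ypos_gap uv; have [z0 z1] := zlayer_bounds u v.
by rewrite /face_contact /=; lra.
Qed.

Lemma last_path_box_contact u v : (rk u < rk v)%N -> (2 <= k u v)%N ->
  face_contact (path_box u v (k u v)) (vertex_box v).
Proof.
move=> uv k_ge2; have := ypos_gap uv; have [z0 z1] := zlayer_bounds u v.
have k_ne1 : (k u v == 1%N) = false by apply/eqP; lia.
by rewrite /face_contact /= k_ne1; lra.
Qed.

Lemma path_boxes_contact u v i : (rk u < rk v)%N -> (0 < i)%N ->
  face_contact (path_box u v i) (path_box u v i.+1).
Proof.
move=> uv i_gt0; have := ypos_gap uv.
have Si_ne1 : (i.+1 == 1%N) = false by apply/eqP; lia.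
rewrite /face_contact /path_box Si_ne1 S_INR /=.
by case: (i =P 1%N) => _; lra.
Qed.

Lemma vertex_boxes_separated a b : a <> b -> separated (vertex_box a) (vertex_box b).
Proof.
move=> ab; have := pos_INR kmax; exists 0%N => //=.
case: (ltngtP (rk a) (rk b)) => [lt|gt|/rk_inj//].
- by have := xpos_gap lt; lra.
- by have := xpos_gap gt; lra.
Qed.

Lemma path_boxes_separated u v i j : (i.+2 <= j)%N ->
  separated (path_box u v i) (path_box u v j).
Proof.
move=> ij; have := INR_leq ij; rewrite !S_INR => ijR.
have j_ne1 : (j == 1%N) = false by apply/eqP; lia.
by exists 0%N => //; rewrite /path_box j_ne1 /=; lra.
Qed.

Lemma path_boxes_separated_layers u v i u' v' j : (u, v) <> (u', v') ->
  separated (path_box u v i) (path_box u' v' j).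
Proof. by move/zlayer_gap => gap; exists 2%N => //=; lra. Qed.

Lemma vertex_path_box_separated a u v i : (rk u < rk v)%N -> (0 < i <= k u v)%N ->
  ~ (a = u /\ i = 1%N) -> ~ (a = v /\ i = k u v) ->
  separated (vertex_box a) (path_box u v i).
Proof.
move=> uv /andP [i_gt0 i_le] not_first not_last.
have k_le := k_le_kmax u v; have kmax_ge0 := pos_INR kmax.
case: (ltngtP (rk a) (rk v)) => [av|va|/rk_inj av].
- have := xpos_gap av; case: (i =P 1%N) => [i1 | /eqP i_ne1] xgap.
  + subst i; case: (ltngtP (rk a) (rk u)) => [au|ua|/rk_inj au]; last by case: not_first.
    * by have := xpos_gap au; exists 0%N => //=; lra.
    * by have := ypos_gap ua; exists 1%N => //=; lra.
  + have /INR_leq /= i_ge2 : (2 <= i)%N by lia.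
    by exists 0%N => //; rewrite /path_box (negPf i_ne1) /=; lra.
- have := xpos_gap va; have := INR_leq i_le.
  by exists 0%N => //=; lra.
- subst a; have /INR_ltn i_lt : (i < k u v)%N.
    by rewrite ltn_neqAle i_le andbT; apply/eqP => i_eq; apply: not_last.
  by exists 0%N => //=; lra.
Qed.

Variable e : rel T.

Lemma sub_box_ok x : sub_valid e k x -> box_ok (sub_box x).
Proof.
case: x => [w|[[u v] i]] /= valid; first exact: vertex_box_ok.
by case/and3P: valid => _ uv _; apply: path_box_ok.
Qed.

Lemma sub_step_face_contact x y :
  (forall u v, e u v -> (2 <= k u v)%N) ->
  sub_valid e k x -> sub_valid e k y -> sub_step k x y ->
  face_contact (sub_box x) (sub_box y).
Proof.
move=> k_ge2; case: x => [a|[[u v] i]]; case: y => [b|[[u' v'] j]] //=.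
- by move=> _ /and3P [_ uv _] [-> ->]; apply: first_path_box_contact.
- by move=> /and3P [euv uv _] _ [-> ->]; apply: last_path_box_contact (k_ge2 _ _ euv).
- move=> /and3P [_ uv /andP [i_gt0 _]] _ [<- [<- ->]].
  exact: path_boxes_contact.
Qed.

Lemma sub_boxes_separated x y : sub_valid e k x -> sub_valid e k y -> x <> y ->
  ~ sub_step k x y -> ~ sub_step k y x -> separated (sub_box x) (sub_box y).
Proof.
case: x => [a|[[u v] i]]; case: y => [b|[[u' v'] j]] /= valid_x valid_y xy nxy nyx.
- by apply: vertex_boxes_separated => ab; apply: xy; rewrite ab.
- by case/and3P: valid_y => _ uv ij; apply: vertex_path_box_separated.
- by case/and3P: valid_x => _ uv ij; apply/separated_sym/vertex_path_box_separated.
- case: (eqVneq (u, v) (u', v')) => [[eq_u eq_v]|uv_ne]; last first.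
    by apply: path_boxes_separated_layers => uv_eq; rewrite uv_eq eqxx in uv_ne.
  subst u' v'; case: (ltngtP i j) => [lt|gt|eq_ij].
  + apply: path_boxes_separated.
    have : j <> i.+1 by move=> ji; apply: nxy.
    lia.
  + apply/separated_sym/path_boxes_separated.
    have : i <> j.+1 by move=> ij; apply: nyx.
    lia.
  + by case: xy; rewrite eq_ij.
Qed.

End SubdivisionBoxes.

Theorem mainTheorem18 (T : finType) (e : rel T) (k : T -> T -> nat) :
  symmetric e -> irreflexive e ->
  (forall u v : T, e u v -> (2 <= k u v)%N) ->
  CBU3 (@sub_adj T e k).
Proof.
move=> _ _ k_ge2.
apply: (@CBU3_of_contact_separated _ _ (fun x : sub_vertex e k => sub_box k (val x))).
- by case=> x valid_x; apply: sub_box_ok valid_x.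
- move=> [x valid_x] [y valid_y] _ [step|step]; [left|right].
  + exact: sub_step_face_contact k_ge2 valid_x valid_y step.
  + exact: sub_step_face_contact k_ge2 valid_y valid_x step.
- move=> [x valid_x] [y valid_y] xy nadj.
  apply: (sub_boxes_separated valid_x valid_y).
  + by move=> eq_xy; apply: xy; apply: val_inj.
  + by move=> step; apply: nadj; left.
  + by move=> step; apply: nadj; right.
Qed.
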